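(* Let $n\ge 2$ and let $f:\mathbb{R}^n\to\mathbb{R}^n$ be a Laplacian map. Then, for the system $\dot x=f(x)$, the $\alpha$-limit set and the $\omega$-limit set of any trajectory consist of equilibrium points.
   Context: A real $n\times n$ matrix $L=(l_{ij})$ is a Laplacian matrix if it is symmetric and $l_{ii}=-\sum_{j\neq i} l_{ij}$ for $i=1,\dots,n$. A map $f:\mathbb{R}^n\to\mathbb{R}^n$ of class $C^1$ is a Laplacian map if its Jacobian matrix $Jf(x)$ is a Laplacian matrix for every $x\in\mathbb{R}^n$. *)

From HB Require Import structures.
From mathcomp Require Import all_boot all_order all_algebra.
From mathcomp Require Import all_classical all_reals.
From mathcomp Require Import topology normedtype sequences derive.
Set Implicit Arguments. Unset Strict Implicit. Unset Printing Implicit Defensive.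
Import Order.TTheory GRing.Theory Num.Theory.
Import numFieldNormedType.Exports.
Local Open Scope classical_set_scope.
Local Open Scope ring_scope.

Definition laplacian_matrix (R : numDomainType) (n : nat) (L : 'M[R]_n) : Prop :=
  L^T = L /\ forall i : 'I_n, L i i = - \sum_(j < n | j != i) L i j.

(* Jacobian matrix Jf(x) with the usual convention (Jf x) i j = d f_i / d x_j.
   MathComp-Analysis' [jacobian] uses the row-vector convention
   ((jacobian f x) i j = d f_j / d x_i), hence the transpose. *)
Definition Jac (R : realType) (n : nat) (f : 'rV[R]_n -> 'rV[R]_n) (x : 'rV[R]_n)
  : 'M[R]_n := (jacobian f x)^T.

Definition C1 (R : realType) (n : nat) (f : 'rV[R]_n -> 'rV[R]_n) : Prop :=
  (forall x, differentiable f x) /\ continuous (fun x => jacobian f x).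

Definition laplacian_map (R : realType) (n : nat) (f : 'rV[R]_n -> 'rV[R]_n) : Prop :=
  C1 f /\ forall x, laplacian_matrix (Jac f x).

Definition solution_on (R : realType) (n : nat) (f : 'rV[R]_n -> 'rV[R]_n)
  (I : set R) (phi : R -> 'rV[R]_n) : Prop :=
  forall t, I t -> is_derive t (1 : R) phi (f (phi t)).

Definition omega_limit (R : realType) (n : nat) (phi : R -> 'rV[R]_n) : set 'rV[R]_n :=
  [set p | exists s : nat -> R, (s @ \oo --> +oo) /\ ((phi \o s) @ \oo --> p)].

Definition alpha_limit (R : realType) (n : nat) (phi : R -> 'rV[R]_n) : set 'rV[R]_n :=
  [set p | exists s : nat -> R, (s @ \oo --> -oo) /\ ((phi \o s) @ \oo --> p)].

From HB Require Import structures.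
From mathcomp Require Import all_boot all_order all_algebra.
From mathcomp Require Import all_classical all_reals.
From mathcomp Require Import topology normedtype sequences derive.
From mathcomp Require Import realfun measure lebesgue_measure lebesgue_integral ftc.
From mathcomp Require Import lra.
Import Order.TTheory GRing.Theory Num.Theory.
Import numFieldNormedType.Exports.
Local Open Scope classical_set_scope.
Local Open Scope ring_scope.
Set Implicit Arguments. Unset Strict Implicit. Unset Printing Implicit Defensive.

(* A symmetric Jacobian makes f the gradient of P(x) = int_0^1 f(y x) . x dy,
   so along a solution phi of x' = f(x) we get d/dt P(phi t) = |f(phi t)|^2 >= 0.
   Let p be an omega-limit point with f(p) <> 0. Near p the speed |f| is
   bounded and |f|^2 is bounded below, so after each of the infinitely many
   visits of phi close to p, phi stays near p for a fixed time tau and P(phi)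
   gains a fixed amount; hence P(phi t) is unbounded. But P(phi t) is
   nondecreasing and bounded at the visits, a contradiction. Alpha-limit points
   of phi are omega-limit points of t |-> phi(-t), a solution of x' = -f(x). *)

Definition dot (R : pzRingType) (n : nat) (u v : 'rV[R]_n) : R :=
  \sum_i u ord0 i * v ord0 i.

Section DotAlgebra.
Variables (R : comPzRingType) (n : nat).
Implicit Types (u v : 'rV[R]_n).

Lemma dotZl a u v : dot (a *: u) v = a * dot u v.
Proof. by rewrite /dot mulr_sumr; apply: eq_bigr => i _; rewrite mxE mulrA. Qed.

Lemma dot0r u : dot u 0 = 0.
Proof. by rewrite /dot big1 // => i _; rewrite mxE mulr0. Qed.

Lemma dot_mulmx_sym (M : 'M[R]_n) u v : M^T = M -> dot (u *m M) v = dot (v *m M) u.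
Proof.
move=> MT; rewrite /dot.
under eq_bigr do rewrite mxE mulr_suml.
rewrite exchange_big /=; apply: eq_bigr => i _.
rewrite mxE mulr_suml; apply: eq_bigr => j _.
by rewrite -[in LHS]MT mxE mulrC [u _ _ * _]mulrC mulrA.
Qed.

End DotAlgebra.

Lemma dot_ge0 (R : realDomainType) n (u : 'rV[R]_n) : 0 <= dot u u.
Proof. by apply: sumr_ge0 => i _; rewrite -expr2 sqr_ge0. Qed.

Lemma dot_gt0 (R : realDomainType) n (u : 'rV[R]_n) : u != 0 -> 0 < dot u u.
Proof.
have sq_ge0 i : 0 <= u ord0 i * u ord0 i by rewrite -expr2 sqr_ge0.
move=> u0; rewrite lt_def sumr_ge0 // andbT.
apply: contra u0 => /eqP /(psumr_eq0P (fun i _ => sq_ge0 i)) uu0.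
apply/eqP/matrixP => i j; rewrite (ord1 i) mxE.
by apply/eqP; have /eqP := uu0 j isT; rewrite mulf_eq0 orbb.
Qed.

(* The norm on matrices is the max norm over the entries, hence the factors n below. *)
Section NormBounds.
Variable R : realFieldType.

Lemma norm_coord_le m k (M : 'M[R]_(m, k)) i j : `|M i j| <= `|M|.
Proof. by rewrite [leRHS]/Num.Def.normr/= mx_normrE; exact: (le_bigmax _ _ (i, j)). Qed.

Lemma norm_rV_le k (v : 'rV[R]_k) B :
  0 <= B -> (forall i, `|v ord0 i| <= B) -> `|v| <= B.
Proof.
move=> B0 vB; rewrite [leLHS]/Num.Def.normr/= mx_normrE (bigmax_le _ B0)//= => -[i j] _.
by rewrite (ord1 i).
Qed.

Variable n : nat.

Lemma norm_dot_le (u v : 'rV[R]_n) : `|dot u v| <= n%:R * (`|u| * `|v|).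
Proof.
rewrite /dot (le_trans (ler_norm_sum _ _ _))// mulr_natl -[X in _ *+ X]card_ord -sumr_const.
by apply: ler_sum => i _; rewrite normrM ler_pM ?norm_coord_le.
Qed.

Lemma norm_mulmx_le k (u : 'rV[R]_n) (M : 'M[R]_(n, k)) :
  `|u *m M| <= n%:R * (`|u| * `|M|).
Proof.
apply: norm_rV_le => [|j]; first by rewrite !mulr_ge0.
rewrite mxE (le_trans (ler_norm_sum _ _ _))// mulr_natl -[X in _ *+ X]card_ord -sumr_const.
by apply: ler_sum => i _; rewrite normrM ler_pM ?norm_coord_le.
Qed.

End NormBounds.

Section PointwiseContinuity.
Variables (R : realFieldType) (T : topologicalType) (x : T).

Lemma continuous_coord m k (M : T -> 'M[R]_(m, k)) i j :
  {for x, continuous M} -> {for x, continuous (fun t => M t i j)}.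
Proof. by move=> cM; exact: (continuous_comp cM (@coord_continuous R m k i j (M x))). Qed.

Lemma continuous_sum k (h : 'I_k -> T -> R) :
  (forall i, {for x, continuous (h i)}) -> {for x, continuous (fun t => \sum_i h i t)}.
Proof.
move=> ch; have -> : (fun t => \sum_i h i t) = \sum_i h i by apply/funext => t; rewrite fct_sumE.
apply: (big_ind (fun g : T -> R => {for x, continuous g})) => //.
  exact: cst_continuous.
by move=> g1 g2; apply: continuousD.
Qed.

Variable n : nat.

Lemma continuous_dot (u v : T -> 'rV[R]_n) :
  {for x, continuous u} -> {for x, continuous v} ->
  {for x, continuous (fun t => dot (u t) (v t))}.
Proof.
by move=> cu cv; apply: continuous_sum => i; apply: continuousM; apply: continuous_coord.
Qed.

Lemma continuous_dot_mulmx (u v : T -> 'rV[R]_n) (M : T -> 'M[R]_n) :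
  {for x, continuous u} -> {for x, continuous v} -> {for x, continuous M} ->
  {for x, continuous (fun t => dot (u t *m M t) (v t))}.
Proof.
move=> cu cv cM; apply: continuous_sum => j.
apply: continuousM; last exact: continuous_coord.
under [X in {for x, continuous X}]eq_fun do rewrite mxE.
by apply: continuous_sum => i; apply: continuousM; apply: continuous_coord.
Qed.

End PointwiseContinuity.

Section PathDerivatives.
Variable R : realFieldType.

Lemma is_derive_coord m k (u : R -> 'M[R]_(m, k)) (x : R) du i j :
  is_derive x (1 : R) u du -> is_derive x (1 : R) (fun t => u t i j) (du i j).
Proof.
move=> ud; have dx : derivable u x 1 by case: ud.
apply: DeriveDef; first by move/derivable_mxP: dx; apply.
by have := derive_mx dx; rewrite derive_val => ->; rewrite mxE.
Qed.

Lemma is_derive_dot n (u v : R -> 'rV[R]_n) (x : R) du dv :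
  is_derive x 1 u du -> is_derive x 1 v dv ->
  is_derive x (1 : R) (fun t => dot (u t) (v t)) (dot du (v x) + dot (u x) dv).
Proof.
move=> ud vd.
have -> : (fun t => dot (u t) (v t)) = \sum_i (fun t => u t ord0 i * v t ord0 i).
  by apply/funext => t; rewrite /dot fct_sumE.
apply: is_derive_eq.
  apply: is_derive_sum => i.
  exact: is_deriveM (is_derive_coord ord0 i ud) (is_derive_coord ord0 i vd).
rewrite /dot -big_split /=; apply: eq_bigr => i _.
by rewrite /GRing.scale /= addrC [_ * du _ _]mulrC.
Qed.

Lemma is_derive_scalel (V : normedModType R) (v : V) (y : R) :
  is_derive y (1 : R) (fun s : R => s *: v) v.
Proof.
have [sd sdE] := is_diff_scalel y v.
by apply: DeriveDef; [exact: diff_derivable | rewrite deriveE // sdE scale1r].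
Qed.

Lemma is_derive_comp_diff (V W : normedModType R) (F : V -> W) (g : R -> V) (x : R) dg :
  is_derive x 1 g dg -> differentiable F (g x) ->
  is_derive x (1 : R) (F \o g) ('d F (g x) dg).
Proof.
move=> gd Fd; have gx : differentiable g x by apply/derivable1_diffP; case: gd.
have Fgx : differentiable (F \o g) x by exact: differentiable_comp.
apply: DeriveDef; first exact: diff_derivable.
by rewrite deriveE // diff_comp //= -(deriveE _ gx) derive_val.
Qed.

Lemma is_derive_jacobian_comp m k (F : 'rV[R]_m -> 'rV[R]_k) (g : R -> 'rV[R]_m) (x : R) dg :
  is_derive x 1 g dg -> differentiable F (g x) ->
  is_derive x (1 : R) (fun t => F (g t)) (dg *m jacobian F (g x)).
Proof.
move=> gd Fd; rewrite -deriveEjacobian // deriveE //.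
exact: is_derive_comp_diff.
Qed.

Lemma jacobianN m k (F : 'rV[R]_m -> 'rV[R]_k) (x : 'rV[R]_m) :
  differentiable F x -> jacobian (- F) x = - jacobian F x.
Proof.
move=> Fd; apply/row_matrixP => i; rewrite !rowE -(deriveEjacobian _ (differentiableN Fd)).
have Fdi : derivable F x (delta_mx 0 i) by exact: diff_derivable.
by rewrite (deriveN Fdi) (deriveEjacobian _ Fd) -mulmxN.
Qed.

Lemma is_derive_reverse (V : normedModType R) (g : R -> V) (t : R) dg :
  is_derive (- t) 1 g dg -> is_derive t (1 : R) (fun s => g (- s)) (- dg).
Proof.
move=> gd; have gx : differentiable g (- t) by apply/derivable1_diffP; case: gd.
apply: is_derive_eq (is_derive_comp_diff (is_deriveNid t 1) gx) _.
by rewrite linearN -deriveE // derive_val.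
Qed.

End PathDerivatives.

Section RealAnalysis.
Variable R : realType.

Lemma derive_ge_increment (W dW : R -> R) (a b m : R) : a <= b ->
  {in `[a, b], forall x, is_derive x (1 : R) W (dW x)} ->
  {in `]a, b[, forall x, m <= dW x} -> W a + m * (b - a) <= W b.
Proof.
rewrite le_eqVlt => /orP[/eqP <-|ab] Wd mdW; first by rewrite subrr mulr0 addr0.
have Wc : {within `[a, b], continuous W}.
  by apply: derivable_within_continuous => x /Wd [].
have [c cab WE] := MVT ab (fun x xab => Wd x (subset_itv_oo_cc xab)) Wc.
have ba0 : 0 <= b - a by rewrite subr_ge0 ltW.
have := ler_wpM2r ba0 (mdW c cab); lra.
Qed.

Lemma mean_value_le n (g dg : R -> 'rV[R]_n) (a b M : R) : a <= b ->
  {in `[a, b], forall x, is_derive x (1 : R) g (dg x)} ->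
  {in `]a, b[, forall x, `|dg x| <= M} -> `|g b - g a| <= M * (b - a).
Proof.
rewrite le_eqVlt => /orP[/eqP <-|ab] gd dgM; first by rewrite !subrr normr0 mulr0.
have M0 : 0 <= M by apply: le_trans (dgM _ (mid_in_itvoo ab)).
apply: norm_rV_le => [|i]; first by rewrite mulr_ge0 // subr_ge0 ltW.
pose gi t := g t ord0 i.
have gid x : x \in `[a, b] -> is_derive x (1 : R) gi (dg x ord0 i).
  by move=> /gd xd; exact: is_derive_coord.
have gic : {within `[a, b], continuous gi}.
  by apply: derivable_within_continuous => x /gid [].
have [c cab giE] := MVT ab (fun x xab => gid x (subset_itv_oo_cc xab)) gic.
have ba0 : 0 <= b - a by rewrite subr_ge0 ltW.
rewrite !mxE -/(gi b) -/(gi a) giE normrM (ger0_norm ba0) ler_wpM2r //.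
exact: le_trans (norm_coord_le _ _ _) (dgM _ cab).
Qed.

Lemma continuity_argument (h : R -> R) (a b r r' : R) : r' < r ->
  {in `[a, b], continuous h} ->
  {in `[a, b], forall s, (forall u, a <= u < s -> h u < r) -> h s <= r'} ->
  {in `[a, b], forall s, h s <= r'}.
Proof.
(* With c the supremum of the s up to which h < r, continuity at c rules out c < b. *)
move=> r'r hc hstep.
have [ba|ab] := ltP b a.
  by move=> s; rewrite in_itv /= => /andP[sa sb]; move: (le_trans sa sb); rewrite leNgt ba.
pose S := [set s | a <= s <= b /\ forall u, a <= u <= s -> h u < r].
have aab : a \in `[a, b] by rewrite in_itv /= lexx ab.
have Sa : S a.
  split; first by rewrite lexx ab.
  move=> u /andP[au ua]; have -> : u = a by apply/le_anti; rewrite ua au.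
  apply: (le_lt_trans _ r'r); apply: (hstep a aab) => v /andP[av va].
  by move: (le_lt_trans av va); rewrite ltxx.
have supS : has_sup S by split; [exists a | exists b => s [/andP[_ sb] _]].
set c := sup S.
have ac : a <= c := sup_upper_bound supS Sa.
have cb : c <= b by apply: ge_sup; [exists a | move=> s [/andP[_ sb] _]].
have below u : a <= u < c -> h u < r.
  move=> /andP[au uc].
  have cu0 : 0 < c - u by rewrite subr_gt0.
  have [s [_ hs] us] := sup_adherent cu0 supS.
  by apply: hs; rewrite au /=; move: us; rewrite /c; lra.
have cin : c \in `[a, b] by rewrite in_itv /= ac cb.
have hcr' : h c <= r' := hstep c cin below.
have bc : b <= c.
  rewrite leNgt; apply/negP => cb'.
  have rr'0 : 0 < r - r' by rewrite subr_gt0.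
  have /cvgrPdist_lt /(_ _ rr'0) /nbhs_ballP [d d0 hd] := hc c cin.
  pose s := Num.min (c + d / 2) b.
  have cs : c < s by rewrite lt_min cb' andbT ltrDl divr_gt0.
  have sb : s <= b by rewrite ge_min lexx orbT.
  have scd : s <= c + d / 2 by rewrite ge_min lexx.
  suff /(sup_upper_bound supS) : S s by rewrite -/c; lra.
  split; first by rewrite sb andbT (le_trans ac (ltW cs)).
  move=> u /andP[au us]; have [uc|cu] := ltP u c; first by rewrite below // au.
  have : ball c d u.
    by rewrite -ball_normE /= ler0_norm ?subr_le0 //; lra.
  by move=> /hd; rewrite ltr_norml => /andP[]; lra.
move=> s sin; apply: (hstep s sin) => u /andP[au us]; rewrite below // au /=.
by move: sin; rewrite in_itv /= => /andP[_]; lra.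
Qed.

Lemma increments_unbounded (W : R -> R) (t0 tau delta : R) : 0 <= tau -> 0 < delta ->
  (forall x y, t0 < x -> x <= y -> W x <= W y) ->
  (forall T, t0 < T -> exists2 t, T <= t & W t + delta <= W (t + tau)) ->
  forall B, exists2 t, t0 < t & B < W t.
Proof.
move=> tau0 delta0 Wmono Wincr.
have climb m : exists2 t, t0 < t & W (t0 + 1) + m%:R * delta <= W t.
  elim: m => [|m [t t0t Wt]]; first by exists (t0 + 1); rewrite ?mul0r ?addr0 //; lra.
  have [t' tt' Wt'] := Wincr t t0t.
  exists (t' + tau); first lra.
  have := Wmono t t' t0t tt'; rewrite -natr1 mulrDl mul1r; lra.
move=> B; have [t t0t Wt] := climb (Num.truncn ((B - W (t0 + 1)) / delta)).+1.
exists t => //; have := truncnS_gt ((B - W (t0 + 1)) / delta).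
by rewrite ltr_pdivrMr //; lra.
Qed.

Lemma bounded_on_closed_ball n m k (F : 'rV[R]_n -> 'M[R]_(m, k)) : continuous F ->
  forall rho, exists M, forall z, `|z| <= rho -> `|F z| <= M.
Proof.
move=> cF rho; pose A := closed_ball_ Num.norm (0 : 'rV[R]_n) rho.
have inA z : A z = (`|z| <= rho) by rewrite /A /closed_ball_ /= sub0r normrN.
have Ac : compact A.
  apply: bounded_closed_compact; last exact: closed_closed_ball_.
  exists rho; split; first exact: num_real.
  by move=> M rM z; rewrite inA => /le_trans; apply; exact: ltW.
have /compact_bounded [M [_ HM]] := continuous_compact (continuous_subspaceT cF) Ac.
exists (M + 1) => z zr; apply: (HM (M + 1)); first lra.
by exists z; rewrite ?inA.
Qed.

Lemma near_norm_le (T : topologicalType) (V : normedModType R) (u : T -> V) t :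
  {for t, continuous u} -> \forall s \near t, `|u s| <= `|u t| + 1.
Proof.
move=> /cvgrPdist_lt /(_ 1 ltr01); apply: filterS => s us.
by have := lerB_dist (u s) (u t); rewrite distrC in us; lra.
Qed.

Lemma near_is_derive_bounded (V : normedModType R) (g dg : R -> V) (t : R) :
  (\forall s \near t, is_derive s (1 : R) g (dg s)) -> {for t, continuous dg} ->
  exists rho, exists2 d, 0 < d & forall s, `|t - s| < d ->
    [/\ is_derive s (1 : R) g (dg s), `|g s| <= rho & `|dg s| <= rho].
Proof.
move=> gd dgc; have gc : {for t, continuous g}.
  by apply: differentiable_continuous; apply/derivable1_diffP; case: (nbhs_singleton gd).
exists (`|g t| + `|dg t| + 1).
have [d d0 hd] := (nbhs_ballP _ _).1 (filterI gd (filterI (near_norm_le gc) (near_norm_le dgc))).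
exists d => // s ts; have /hd [gsd [gs dgs]] : ball t d s by rewrite -ball_normE.
by have := normr_ge0 (g t); have := normr_ge0 (dg t); split => //; lra.
Qed.

Lemma continuous_comp_scalel (V W : normedModType R) (F : V -> W) (x : V) :
  continuous F -> continuous (fun s : R => F (s *: x)).
Proof.
move=> Fc y; change {for y, continuous (F \o ( *:%R^~ x))}.
by apply: continuous_comp; [exact: scalel_continuous | exact: Fc].
Qed.

Lemma continuous_integrable_itvcc (h : R -> R) (a b : R) : continuous h ->
  (@lebesgue_measure R).-integrable `[a, b] (EFin \o h).
Proof.
move=> hc; apply: continuous_compact_integrable; first exact: segment_compact.
exact: continuous_subspaceT.
Qed.

End RealAnalysis.

Section LimitSets.
Variables (R : realType) (n : nat).

Lemma omega_limit_visits (phi : R -> 'rV[R]_n) p :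
  omega_limit phi p -> forall T eps, 0 < eps -> exists2 t, T <= t & `|phi t - p| < eps.
Proof.
move=> [s [sy sp]] T eps eps0.
have /cvgryPge /(_ T) sT := sy; have /cvgrPdist_lt /(_ eps eps0) sp' := sp.
have [k [Tk pk]] := filter_ex (filterI sT sp').
by exists (s k); rewrite // distrC.
Qed.

Lemma solution_on_reverse (f : 'rV[R]_n -> 'rV[R]_n) phi t0 :
  solution_on f `]-oo, t0[ phi -> solution_on (- f) `]- t0, +oo[ (fun t => phi (- t)).
Proof.
move=> sol t; rewrite /= in_itv /= andbT => t0t.
by apply: is_derive_reverse; apply: sol; rewrite /= in_itv /= ltrNl.
Qed.

Lemma alpha_limit_reverse (phi : R -> 'rV[R]_n) p :
  alpha_limit phi p -> omega_limit (fun t => phi (- t)) p.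
Proof.
move=> [s [sy sp]]; exists (fun k => - s k); split; first exact/cvgNry.
suff -> : (fun t => phi (- t)) \o (fun k => - s k) = phi \o s by [].
by apply/funext => k /=; rewrite opprK.
Qed.

End LimitSets.

Section GradientFlow.
Variables (R : realType) (n : nat) (f : 'rV[R]_n -> 'rV[R]_n).
Hypothesis f_diff : forall x, differentiable f x.
Hypothesis jacobian_cont : continuous (fun x => jacobian f x).
Hypothesis jacobian_sym : forall x, (jacobian f x)^T = jacobian f x.
Local Notation V := 'rV[R]_n.

Let f_cont : continuous f.
Proof. by move=> x; apply: differentiable_continuous. Qed.

Lemma continuous_potential_integrand (x : V) : continuous (fun y : R => dot (f (y *: x)) x).
Proof.
move=> y; apply: continuous_dot; last exact: cst_continuous.
exact: continuous_comp_scalel.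
Qed.

(* Under [jacobian_sym], f is the gradient of [potential] (Poincare lemma). *)
Definition potential (x : V) : R :=
  \int[@lebesgue_measure R]_(y in `[0, 1]) dot (f (y *: x)) x.

(* The y-derivative of [y * dot (f (y *: x)) w] and, by symmetry of the
   Jacobian, the derivative of [dot (f (y *: x)) x] in x along w. *)
Definition radial_deriv (x w : V) (y : R) : R :=
  y * dot (x *m jacobian f (y *: x)) w + dot (f (y *: x)) w.

Lemma is_derive_radial (x w : V) (y : R) :
  is_derive y (1 : R) (fun s => s * dot (f (s *: x)) w) (radial_deriv x w y).
Proof.
have fd := is_derive_jacobian_comp (is_derive_scalel x y) (f_diff (y *: x)).
have := is_deriveM (is_derive_id y 1) (is_derive_dot fd (is_derive_cst w y 1)).
by rewrite dot0r addr0 /GRing.scale /= mulr1.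
Qed.

Lemma continuous_radial_deriv (x w : V) : continuous (radial_deriv x w).
Proof.
move=> y; have Jc : {for y, continuous (fun s : R => s * dot (x *m jacobian f (s *: x)) w)}.
  apply: continuousM; first exact: cvg_id.
  apply: continuous_dot_mulmx; [exact: cst_continuous | exact: cst_continuous |].
  exact: continuous_comp_scalel.
have fc : {for y, continuous (fun s : R => dot (f (s *: x)) w)}.
  apply: continuous_dot; last exact: cst_continuous.
  exact: continuous_comp_scalel.
exact: continuousD Jc fc.
Qed.

Lemma Rintegral_radial_deriv (x w : V) :
  \int[@lebesgue_measure R]_(y in `[0, 1]) radial_deriv x w y = dot (f x) w.
Proof.
pose F (s : R) := s * dot (f (s *: x)) w.
have Fd (y : R) : is_derive y (1 : R) F (radial_deriv x w y) := is_derive_radial x w y.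
have Fc : continuous F.
  by move=> y; apply: differentiable_continuous; apply/derivable1_diffP; case: (Fd y).
have dF : derivable_oo_LRcontinuous F 0 1.
  split; first by move=> y _; case: (Fd y).
    exact: cvg_at_right_filter (Fc 0).
  exact: cvg_at_left_filter (Fc 1).
have F'f : {in `]0, 1[, F^`()%classic =1 radial_deriv x w}.
  by move=> y _; rewrite derive1E derive_val.
have rc : {within `[0, 1], continuous (radial_deriv x w)}.
  by apply: continuous_subspaceT; exact: continuous_radial_deriv.
have := continuous_FTC2 ltr01 rc dF F'f.
by rewrite /Rintegral => ->; rewrite -EFinB /= /F mul0r subr0 mul1r scale1r.
Qed.

Lemma is_derive_potential_integrand (g : R -> V) (t : R) dg (y : R) :
  is_derive t 1 g dg ->
  is_derive t (1 : R) (fun s => dot (f (y *: g s)) (g s)) (radial_deriv (g t) dg y).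
Proof.
move=> gd.
have fd := is_derive_jacobian_comp (is_deriveZ y gd) (f_diff (y *: g t)).
apply: is_derive_eq (is_derive_dot fd gd) _.
by rewrite /radial_deriv -scalemxAl dotZl dot_mulmx_sym.
Qed.

Lemma radial_deriv_bounded (rho : R) : exists K, forall x w y,
  `|x| <= rho -> `|w| <= rho -> y \in `[0, 1] -> `|radial_deriv x w y| <= K.
Proof.
have [Mf Mf_ub] := bounded_on_closed_ball f_cont rho.
have [MJ MJ_ub] := bounded_on_closed_ball jacobian_cont rho.
exists (n%:R * ((n%:R * (rho * MJ)) * rho) + n%:R * (Mf * rho)) => x w y xr wr.
rewrite in_itv /= => /andP[y0 y1].
have yxr : `|y *: x| <= rho by rewrite normrZ ger0_norm // (le_trans _ xr) // ler_piMl.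
apply: le_trans (ler_normD _ _) _; apply: lerD.
  rewrite normrM ger0_norm //; apply: le_trans (ler_piMl _ y1) _; first exact: normr_ge0.
  apply: le_trans (norm_dot_le _ _) _; rewrite ler_wpM2l // ler_pM //.
  apply: le_trans (norm_mulmx_le _ _) _; rewrite ler_wpM2l // ler_pM //.
  exact: MJ_ub.
apply: le_trans (norm_dot_le _ _) _; rewrite ler_wpM2l // ler_pM //.
exact: Mf_ub.
Qed.

Lemma is_derive_potential_comp (g dg : R -> V) (t : R) :
  (\forall s \near t, is_derive s (1 : R) g (dg s)) -> {for t, continuous dg} ->
  is_derive t (1 : R) (potential \o g) (dot (f (g t)) (dg t)).
Proof.
move=> gd dgc; have [rho [d d0 hd]] := near_is_derive_bounded gd dgc.
have rho0 : 0 <= rho.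
  have tt : `|t - t| < d by rewrite subrr normr0.
  by have [_ /(le_trans (normr_ge0 _))] := hd t tt.
have [K K_ub] := radial_deriv_bounded rho.
pose k s y := dot (f (y *: g s)) (g s).
have I_ball s : s \in `]t - d, t + d[ -> `|t - s| < d.
  by rewrite in_itv /= ltr_norml => /andP[]; lra.
have kd s y : s \in `]t - d, t + d[ -> is_derive s (1 : R) (k ^~ y) (radial_deriv (g s) (dg s) y).
  by move=> /I_ball /hd [gsd _ _]; exact: is_derive_potential_integrand.
have It : t \in `]t - d, t + d[ by rewrite in_itv /=; apply/andP; split; lra.
have intk s : s \in `]t - d, t + d[ -> (@lebesgue_measure R).-integrable `[0, 1] (EFin \o k s).
  by move=> _; exact/continuous_integrable_itvcc/continuous_potential_integrand.
have k'd s y : s \in `]t - d, t + d[ -> y \in `[0, 1] -> derivable (k ^~ y) s 1.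
  by move=> /(kd _ y) [].
have k'_ub s y : s \in `]t - d, t + d[ -> y \in `[0, 1] -> `|partial1of2 k s y| <= cst K y.
  move=> sI y01; have /I_ball /hd [_ gs dgs] := sI.
  by have ksd := kd s y sI; rewrite partial1of2E derive_val; apply: K_ub.
have K0 : 0 <= K.
  have := K_ub 0 0 0; rewrite normr0 in_itv /= lexx ler01 => /(_ rho0 rho0 isT).
  exact/le_trans/normr_ge0.
have intK : (@lebesgue_measure R).-integrable `[0, 1] (EFin \o cst K).
  exact/continuous_integrable_itvcc/cst_continuous.
apply: DeriveDef.
  by apply: (derivable_under_integral _ It intk k'd (fun=> K0) intK k'_ub); exact: measurable_itv.
rewrite -derive1E (differentiation_under_integral _ It intk k'd (fun=> K0) intK k'_ub); last first.
  exact: measurable_itv.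
rewrite -Rintegral_radial_deriv; apply: eq_Rintegral => y _.
by have ktd := kd t y It; rewrite partial1of2E derive_val.
Qed.

Lemma potential_bounded (rho : R) : exists B, forall x, `|x| <= rho -> `|potential x| <= B.
Proof.
have [Mf Mf_ub] := bounded_on_closed_ball f_cont rho.
pose B := n%:R * (Mf * rho).
exists (\int[@lebesgue_measure R]_(y in `[0, 1]) B) => x xr.
have kc := @continuous_potential_integrand x.
have kB (y : R) : y \in `[0, 1] -> `|dot (f (y *: x)) x| <= B.
  rewrite in_itv /= => /andP[y0 y1]; apply: le_trans (norm_dot_le _ _) _.
  rewrite ler_wpM2l // ler_pM //; apply: Mf_ub.
  by rewrite normrZ ger0_norm // (le_trans _ xr) // ler_piMl.
have nkc : continuous (fun y : R => `|dot (f (y *: x)) x|).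
  by move=> y; apply: (continuous_comp (kc y)); exact: norm_continuous.
apply: le_trans (le_normr_Rintegral _ (continuous_integrable_itvcc 0 1 kc)) _.
  exact: measurable_itv.
apply: (le_Rintegral _ (continuous_integrable_itvcc 0 1 nkc)) kB.
  exact: measurable_itv.
exact/continuous_integrable_itvcc/cst_continuous.
Qed.

Section Trajectory.
Variables (phi : R -> V) (t0 : R).
Hypothesis phi_sol : solution_on f `]t0, +oo[ phi.

Let phi_der t : t0 < t -> is_derive t (1 : R) phi (f (phi t)).
Proof. by move=> t0t; apply: phi_sol; rewrite /= in_itv /= t0t. Qed.

Let phi_cont t : t0 < t -> {for t, continuous phi}.
Proof.
by move=> /phi_der phid; apply: differentiable_continuous; apply/derivable1_diffP; case: phid.
Qed.

Lemma is_derive_potential_solution t : t0 < t ->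
  is_derive t (1 : R) (potential \o phi) (dot (f (phi t)) (f (phi t))).
Proof.
move=> t0t; apply: (@is_derive_potential_comp phi (f \o phi)).
  by near=> s; apply: phi_der; near: s; exact: lt_nbhsr.
by apply: continuous_comp; [exact: phi_cont | exact: f_cont].
Unshelve. all: end_near.
Qed.

Lemma potential_solution_increment a b m : t0 < a -> a <= b ->
  {in `]a, b[, forall x, m <= dot (f (phi x)) (f (phi x))} ->
  potential (phi a) + m * (b - a) <= potential (phi b).
Proof.
move=> t0a ab; apply: (derive_ge_increment (W := potential \o phi)) => // x.
by rewrite in_itv /= => /andP[ax _]; apply: is_derive_potential_solution; lra.
Qed.

Lemma potential_solution_ndecr a b : t0 < a -> a <= b -> potential (phi a) <= potential (phi b).
Proof.
move=> t0a ab; have := @potential_solution_increment a b 0 t0a ab.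
by rewrite mul0r addr0; apply => x _; exact: dot_ge0.
Qed.

Lemma solution_stays_near p r M tau a : 0 < r -> M * tau <= r / 4 ->
  (forall z, `|z - p| < r -> `|f z| <= M) -> t0 < a -> `|phi a - p| < r / 2 ->
  {in `[a, a + tau], forall u, `|phi u - p| <= 3 * r / 4}.
Proof.
move=> r0 Mtau fM t0a pa.
apply: (@continuity_argument _ _ _ _ r); first lra.
  move=> u; rewrite in_itv /= => /andP[au _].
  have phic := phi_cont (lt_le_trans t0a au).
  exact: (continuous_comp (continuousB phic (@cst_continuous _ _ p u)) (@norm_continuous _ _ _)).
move=> s; rewrite in_itv /= => /andP[sa sb] hs.
have : `|phi s - phi a| <= M * (s - a).
  apply: mean_value_le sa _ _ => [x|x].
    by rewrite in_itv /= => /andP[ax _]; apply: phi_der; lra.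
  by rewrite in_itv /= => /andP[ax xs]; apply: fM; apply: hs; rewrite ltW.
have M0 : 0 <= M by apply: le_trans (fM (phi a) _); [exact: normr_ge0 | lra].
have : M * (s - a) <= M * tau by rewrite ler_wpM2l //; lra.
have := ler_distD (phi a) (phi s) p; lra.
Qed.

Lemma potential_solution_bounded p : omega_limit phi p ->
  exists B, forall t, t0 < t -> potential (phi t) <= B.
Proof.
move=> op; have [B B_ub] := potential_bounded (`|p| + 1).
exists B => t t0t; have [t' tt' pt'] := omega_limit_visits op t ltr01.
apply: le_trans (potential_solution_ndecr t0t tt') _.
apply: le_trans (ler_norm _) (B_ub _ _).
by have := lerB_dist (phi t') p; lra.
Qed.

Lemma potential_solution_increments p : omega_limit phi p -> f p != 0 ->
  exists tau delta, [/\ 0 < tau, 0 < delta & forall T, t0 < T ->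
    exists2 t, T <= t & potential (phi t) + delta <= potential (phi (t + tau))].
Proof.
move=> op fp0; pose e := dot (f p) (f p); have e0 : 0 < e := dot_gt0 fp0.
have [r r0 hr] : exists2 r, 0 < r & forall z, `|z - p| < r ->
    e / 2 <= dot (f z) (f z) /\ `|f z| <= `|f p| + 1.
  have /cvgrPdist_lt /(_ (e / 2)) ep := continuous_dot (@f_cont p) (@f_cont p).
  have [|r r0 hr] := (nbhs_ballP _ _).1 (filterI (ep _) (near_norm_le (@f_cont p))).
    by rewrite divr_gt0.
  exists r => // z zp; have /hr [+ fz] : ball p r z by rewrite -ball_normE /= distrC.
  by rewrite ltr_norml -/e => /andP[_ ?]; split => //; lra.
(* After each visit within r / 2 of p, phi spends time tau within r of p. *)
pose M := `|f p| + 1; have M0 : 0 < M by rewrite ltr_wpDl.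
pose tau := r / 4 / M; have tau0 : 0 < tau by rewrite !divr_gt0.
exists tau, (e / 2 * tau); split => [//||T t0T]; first by rewrite mulr_gt0 ?divr_gt0.
have r20 : 0 < r / 2 by rewrite divr_gt0.
have [t Tt pt] := omega_limit_visits op T r20.
have t0t : t0 < t by lra.
exists t => //.
have := @potential_solution_increment t (t + tau) (e / 2) t0t.
rewrite [t + tau - t]addrC addKr; apply; first lra.
move=> u /subset_itv_oo_cc uin; have Mtau : M * tau <= r / 4 by rewrite mulrC divfK ?gt_eqF.
have := solution_stays_near r0 Mtau (fun z zp => (hr z zp).2) t0t pt uin.
have r34 : 3 * r / 4 < r by lra.
by move=> /le_lt_trans /(_ r34) /hr [].
Qed.

Lemma omega_limit_equilibrium p : omega_limit phi p -> f p = 0.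
Proof.
move=> op; apply/eqP/negPn/negP => fp0.
have [B B_ub] := potential_solution_bounded op.
have [tau [delta [tau0 delta0 incr]]] := potential_solution_increments op fp0.
have [t t0t] := increments_unbounded (W := potential \o phi) (ltW tau0) delta0
  potential_solution_ndecr incr B.
by rewrite ltNge B_ub.
Qed.

End Trajectory.
End GradientFlow.

Theorem lemma5p1 (R : realType) (n : nat) (f : 'rV[R]_n -> 'rV[R]_n) :
  (2 <= n)%N -> laplacian_map f ->
  (forall (phi : R -> 'rV[R]_n) (t0 : R),
      solution_on f `]t0, +oo[ phi ->
      forall p, omega_limit phi p -> f p = 0) /\
  (forall (phi : R -> 'rV[R]_n) (t0 : R),
      solution_on f `]-oo, t0[ phi ->
      forall p, alpha_limit phi p -> f p = 0).
Proof.
move=> _ [[f_diff J_cont] f_lap].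
have J_sym x : (jacobian f x)^T = jacobian f x.
  by have [/esym + _] := f_lap x; rewrite /Jac trmxK.
split=> [phi t0 sol p|phi t0 /solution_on_reverse sol p /alpha_limit_reverse op].
  exact: omega_limit_equilibrium f_diff J_cont J_sym _ _ sol p.
have Nf_diff x : differentiable (- f) x by exact: differentiableN.
have NJ_cont : continuous (fun x => jacobian (- f) x).
  have -> : (fun x => jacobian (- f) x) = (fun x => - jacobian f x).
    by apply/funext => x; rewrite jacobianN.
  by move=> x; apply: continuousN; exact: J_cont.
have NJ_sym x : (jacobian (- f) x)^T = jacobian (- f) x by rewrite jacobianN // raddfN /= J_sym.
apply/eqP; rewrite -oppr_eq0; apply/eqP.
exact: omega_limit_equilibrium Nf_diff NJ_cont NJ_sym _ _ sol p op.
Qed.
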